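(* Let $p$ be an odd prime. Let $\mathbf v=(1,\dots,1,0,\dots,0)\in(\mathbb{F}_2)^p$ be the vector whose first $(p+1)/2$ entries are $1$ and last $(p-1)/2$ entries are $0$, and for $i\ge 0$ let $\mathbf v_i$ be the vector obtained from $\mathbf v$ by $i$ cyclic shifts, where a cyclic shift sends $(c_0,c_1,\dots,c_{p-1})$ to $(c_{p-1},c_0,\dots,c_{p-2})$. For $\alpha\in\{1,\dots,p-1\}$ let $A_\alpha$ be the $p\times p$ binary array whose row $i$ ($i=0,\dots,p-1$) is $\mathbf v_r$, where $r\in\{0,\dots,p-1\}$, $r\equiv \alpha i\pmod p$. For binary arrays $A,B$ of the same size and $x,y\in\{0,1\}$, let $|AB|_{(x,y)}$ be the number of cells in which $A$ has entry $x$ and $B$ has entry $y$. Then for all distinct $\alpha,\beta\in\{1,\dots,p-1\}$: (a) $|A_\alpha A_\beta|_{(1,0)}=|A_\alpha A_\beta|_{(0,1)}=(p^2-1)/4$; (b) $|A_\alpha A_\beta|_{(0,0)}=(p-1)^2/4$; (c) $|A_\alpha A_\beta|_{(1,1)}=(p+1)^2/4$. *)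

From mathcomp Require Import all_boot.
Set Implicit Arguments. Unset Strict Implicit. Unset Printing Implicit Defensive.

(* Binary entries are booleans: true = 1, false = 0. Indices 0..p-1 are nats. *)

Definition basevec (p j : nat) : bool := j < p.+1./2.

Definition cshift (p : nat) (c : nat -> bool) : nat -> bool :=
  fun j => c ((j + p.-1) %% p).

Definition shiftvec (p i : nat) : nat -> bool := iter i (cshift p) (basevec p).

Definition arrA (p alpha : nat) (i j : nat) : bool :=
  shiftvec p ((alpha * i) %% p) j.

Definition cellcount (p : nat) (A B : nat -> nat -> bool) (x y : bool) : nat :=
  #|[set c : 'I_p * 'I_p | (A c.1 c.2 == x) && (B c.1 c.2 == y)]|.

From mathcomp Require Import all_boot zify.
Set Implicit Arguments. Unset Strict Implicit. Unset Printing Implicit Defensive.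

(* Since the shift by p.-1 is the shift by -1 modulo p, the entry of A_c in
   cell (i, j) is v_(j - c i). For c = alpha, beta the map
   (i, j) |-> (j - alpha i, j - beta i) is a bijection of (Z/pZ)^2, because
   alpha - beta is invertible modulo p. Hence the cells of type (x, y) are
   counted by #{k | v_k = x} * #{k | v_k = y}, a product of the numbers
   (p + 1)/2 of ones and (p - 1)/2 of zeros of v. *)

Lemma iter_cshiftE p c i j : 0 < p -> j < p ->
  iter i (cshift p) c j = c ((j + i * p.-1) %% p).
Proof.
move=> p_gt0; elim: i j => [|i IHi] j lt_jp; first by rewrite addn0 modn_small.
by rewrite iterS /cshift IHi ?ltn_pmod // modnDml mulSn addnA.
Qed.

Lemma arrAE p a i j : 0 < p -> j < p ->
  arrA p a i j = basevec p ((j + a * i * p.-1) %% p).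
Proof.
by move=> p_gt0 lt_jp; rewrite /arrA /shiftvec iter_cshiftE // -modnDmr modnMml modnDmr.
Qed.

Lemma card_ord_lt n h : h <= n -> #|[set k : 'I_n | k < h]| = h.
Proof.
move=> le_hn; have widen_inj : injective (widen_ord le_hn).
  by move=> u v /(congr1 val) /= /val_inj.
rewrite -[RHS]card_ord -(card_imset _ widen_inj).
apply: eq_card => k; rewrite !inE.
apply/idP/imsetP => [lt_kh|[k' _ ->]]; last exact: (ltn_ord k').
by exists (Ordinal lt_kh); last exact: val_inj.
Qed.

Lemma card_basevec p x :
  #|[set k : 'I_p | basevec p k == x]| = if x then uphalf p else p./2.
Proof.
have le_up : uphalf p <= p by rewrite leq_uphalf_double -addnn leq_addr.
have card_lt := card_ord_lt le_up.
case: x; first by rewrite -card_lt; apply: eq_card => k; rewrite !inE eqb_id uphalfE.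
have := cardsC [set k : 'I_p | k < uphalf p]; rewrite card_lt card_ord.
have -> : ~: [set k : 'I_p | k < uphalf p] = [set k : 'I_p | basevec p k == false].
  by apply/setP => k; rewrite !inE /basevec uphalfE; case: (_ < _).
by rewrite uphalf_half; have := odd_double_half p; lia.
Qed.

Lemma eqn_modM2l d k m n : coprime k d ->
  (k * m == k * n %[mod d]) = (m == n %[mod d]).
Proof.
move=> co_kd; wlog le_nm : m n / n <= m.
  move=> wlog_le; case: (leqP n m) => [/wlog_le // | /ltnW /wlog_le].
  by rewrite eq_sym [in RHS]eq_sym.
by rewrite !eqn_mod_dvd ?leq_mul // -mulnBr Gauss_dvdr // coprime_sym.
Qed.

Lemma eq_ord_mod n (i j : 'I_n) : i = j %[mod n] -> i = j.
Proof. by rewrite !modn_small // => /val_inj. Qed.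

Lemma cross_mod_cancel p a b m n : prime p -> a < p -> b < p -> a != b ->
  a * m + b * n = a * n + b * m %[mod p] -> m = n %[mod p].
Proof.
move=> p_pr lt_ap lt_bp neq_ab eq_mod.
wlog lt_ba : a b lt_ap lt_bp neq_ab eq_mod / b < a.
  move=> wlog_lt; case: (ltngtP a b) => [lt_ab|lt_ba|eq_ab].
  - apply: (wlog_lt b a) => //; first by rewrite eq_sym.
    by rewrite addnC -eq_mod addnC.
  - exact: (wlog_lt a b).
  - by rewrite eq_ab eqxx in neq_ab.
have co_ab : coprime (a - b) p.
  by rewrite coprime_sym prime_coprime ?gtnNdvd ?subn_gt0 // (leq_ltn_trans (leq_subr b a)).
move/eqP: eq_mod; rewrite -(subnK (ltnW lt_ba)) !mulnDl -!addnA [b * n + b * m]addnC.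
by rewrite eqn_modDr eqn_modM2l // => /eqP.
Qed.

Section TwoArrays.

Variables (p a b : nat).
Hypotheses (p_pr : prime p) (lt_ap : a < p) (lt_bp : b < p) (neq_ab : a != b).

Let p_gt0 : 0 < p := prime_gt0 p_pr.

Let base_index c (ij : 'I_p * 'I_p) : 'I_p :=
  Ordinal (ltn_pmod (ij.2 + c * ij.1 * p.-1) p_gt0).

Let index_pair_inj : injective (fun ij => (base_index a ij, base_index b ij)).
Proof.
move=> [i j] [i' j'] [eq_a eq_b].
have /eq_ord_mod eq_i : i = i' %[mod p].
  apply: (cross_mod_cancel p_pr lt_ap lt_bp neq_ab); apply/eqP.
  rewrite -(eqn_modM2l _ _ (coprimePn p_gt0)) -(eqn_modDl (j + j')).
  have -> : j + j' + p.-1 * (a * i + b * i') = (j + a * i * p.-1) + (j' + b * i' * p.-1) by lia.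
  have -> : j + j' + p.-1 * (a * i' + b * i) = (j' + a * i' * p.-1) + (j + b * i * p.-1) by lia.
  by rewrite -modnDm eq_a -eq_b modnDm.
by move/eqP: eq_a; rewrite eq_i eqn_modDr => /eqP /eq_ord_mod ->.
Qed.

Lemma cellcount_arrA x y :
  cellcount p (arrA p a) (arrA p b) x y =
  #|[set k : 'I_p | basevec p k == x]| * #|[set k : 'I_p | basevec p k == y]|.
Proof.
rewrite /cellcount -cardsX -[RHS](card_preimset _ index_pair_inj).
by apply: eq_card => -[i j]; rewrite !inE /= !arrAE.
Qed.

End TwoArrays.

Lemma odd_sqr_div4 p : odd p ->
  [/\ (p ^ 2 - 1) %/ 4 = uphalf p * p./2, (p - 1) ^ 2 %/ 4 = p./2 ^ 2
    & (p + 1) ^ 2 %/ 4 = uphalf p ^ 2].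
Proof.
move=> p_odd; have := odd_double_half p; rewrite uphalf_half p_odd.
move: p./2 => m <-; have div4 k : 4 * k %/ 4 = k by rewrite mulKn.
by split; rewrite -[RHS]div4; congr (_ %/ 4); rewrite -muln2; nia.
Qed.

Theorem mainTheorem15 (p alpha beta : nat) :
  prime p -> odd p ->
  0 < alpha < p -> 0 < beta < p -> alpha != beta ->
  [/\ cellcount p (arrA p alpha) (arrA p beta) true false = (p ^ 2 - 1) %/ 4,
      cellcount p (arrA p alpha) (arrA p beta) false true = (p ^ 2 - 1) %/ 4,
      cellcount p (arrA p alpha) (arrA p beta) false false = (p - 1) ^ 2 %/ 4
    & cellcount p (arrA p alpha) (arrA p beta) true true = (p + 1) ^ 2 %/ 4].
Proof.
move=> p_pr p_odd /andP[_ lt_ap] /andP[_ lt_bp] neq_ab.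
have [-> -> ->] := odd_sqr_div4 p_odd.
by rewrite !cellcount_arrA // !card_basevec mulnC.
Qed.
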